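(* Let $F\colon S^2\to S^2$ be a Thurston map of degree $d$, and let $\theta_0\in\mathbb{R}$. Suppose there is a continuous surjection $\tilde\gamma\colon S^1\to S^2$ such that $F\circ\tilde\gamma=\tilde\gamma\circ\tilde\varphi$ on $S^1$, where $\tilde\varphi(z)=e^{2\pi i\theta_0}z^d$. Then there is a continuous surjection $\gamma\colon S^1\to S^2$ with $F(\gamma(z))=\gamma(z^d)$ for all $z\in S^1$.
   Context: $S^1=\{z\in\mathbb{C}:|z|=1\}$. A Thurston map is an orientation-preserving postcritically finite branched covering of $S^2$ whose postcritical set has at least $3$ points; in particular its degree satisfies $d\ge2$. *)

From HB Require Import structures.
From mathcomp Require Import all_boot all_order all_algebra.
From mathcomp Require Import all_classical all_reals.
From mathcomp Require Import topology normedtype trigo.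
Set Implicit Arguments. Unset Strict Implicit. Unset Printing Implicit Defensive.
Import Order.TTheory GRing.Theory Num.Theory.
Import numFieldNormedType.Exports.
Local Open Scope classical_set_scope.
Local Open Scope ring_scope.

Notation cpx R := (R * R)%type.
Notation pt3 R := (R * R * R)%type.

Section Defs.
Variable R : realType.

(* The complex plane C = R^2 (with its product topology); z = (Re z, Im z). *)
Local Notation cpx := (R * R)%type.
Definition cadd (z w : cpx) : cpx := (z.1 + w.1, z.2 + w.2).
Definition csub (z w : cpx) : cpx := (z.1 - w.1, z.2 - w.2).
Definition cscale (r : R) (z : cpx) : cpx := (r * z.1, r * z.2).
Definition cmul (z w : cpx) : cpx := (z.1 * w.1 - z.2 * w.2, z.1 * w.2 + z.2 * w.1).
Definition c0 : cpx := (0, 0).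
Definition c1 : cpx := (1, 0).
Definition cexpn (z : cpx) (n : nat) : cpx := iter n (cmul z) c1.
Definition cnorm (z : cpx) : R := Num.sqrt (z.1 ^+ 2 + z.2 ^+ 2).
Definition expi (t : R) : cpx := (cos t, sin t).

Definition S1 : set cpx := [set z | cnorm z = 1].
Definition disk : set cpx := [set z | cnorm z < 1].

Local Notation pt3 := (R * R * R)%type.
Definition S2 : set pt3 := [set v | v.1.1 ^+ 2 + v.1.2 ^+ 2 + v.2 ^+ 2 = 1].

Definition open_in_S2 (U : set pt3) : Prop :=
  exists O : set pt3, open O /\ U = O `&` S2.

Definition homeo_on {T U : topologicalType} (A : set T) (B : set U) (f : T -> U) : Prop :=
  {within A, continuous f} /\
  exists g : U -> T, {within B, continuous g} /\
    (forall x, A x -> B (f x) /\ g (f x) = x) /\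
    (forall y, B y -> A (g y) /\ f (g y) = y).

(* the closed curve c : [0,1] -> C \ {a} has winding number 1 around a,
   defined through a continuous lift of the argument *)
Definition winds_once (c : R -> cpx) (a : cpx) : Prop :=
  exists th : R -> R, {within [set t : R | 0 <= t <= 1], continuous th} /\
    (forall t, 0 <= t <= 1 ->
       c t <> a /\ csub (c t) a = cscale (cnorm (csub (c t) a)) (expi (th t))) /\
    th 1 - th 0 = 2 * pi.

(* an injective continuous map h on the open planar set W is orientation
   preserving: small positively oriented circles in W are mapped to curves
   winding once (positively) around the image of the centre *)
Definition orient_pres_plane (W : set cpx) (h : cpx -> cpx) : Prop :=
  forall a r, W a -> 0 < r -> (forall z, cnorm (csub z a) <= r -> W z) ->
    winds_once (fun t => h (cadd a (cscale r (expi (2 * pi * t))))) (h a).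

(* inverse stereographic projections: invN : C -> S^2 \ {(0,0,1)} and
   invS : C -> S^2 \ {(0,0,-1)} (the latter composed with conjugation), which
   form an oriented atlas of S^2 (transition map w |-> 1/w) *)
Definition invN (w : cpx) : pt3 :=
  let s := w.1 ^+ 2 + w.2 ^+ 2 in
  (2 * w.1 / (s + 1), 2 * w.2 / (s + 1), (s - 1) / (s + 1)).
Definition invS (w : cpx) : pt3 :=
  let s := w.1 ^+ 2 + w.2 ^+ 2 in
  (2 * w.1 / (s + 1), - (2 * w.2) / (s + 1), (1 - s) / (s + 1)).

Definition orient_chart (U : set pt3) (phi : pt3 -> cpx) : Prop :=
  orient_pres_plane [set w | U (invN w)] (phi \o invN) /\
  orient_pres_plane [set w | U (invS w)] (phi \o invS).

Definition is_local_deg (F : pt3 -> pt3) (p : pt3) (k : nat) : Prop :=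
  (1 <= k)%N /\
  exists (U V : set pt3) (phi psi : pt3 -> cpx),
    [/\ open_in_S2 U, open_in_S2 V, U p & V (F p)] /\
    [/\ homeo_on U disk phi, homeo_on V disk psi,
        orient_chart U phi & orient_chart V psi] /\
    [/\ phi p = c0, psi (F p) = c0 &
        forall x, U x -> V (F x) /\ psi (F x) = cexpn (phi x) k].

Definition branched_cover (F : pt3 -> pt3) : Prop :=
  (forall x, S2 x -> S2 (F x)) /\ {within S2, continuous F} /\
  forall p, S2 p -> exists k, is_local_deg F p k.

Definition has_degree (F : pt3 -> pt3) (d : nat) : Prop :=
  forall q, S2 q -> exists (s : seq pt3) (k : pt3 -> nat),
    [/\ uniq s, (forall x, (S2 x /\ F x = q) <-> x \in s),
        (forall x, x \in s -> is_local_deg F x (k x)) &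
        (\sum_(x <- s) k x)%N = d].

Definition critical (F : pt3 -> pt3) (c : pt3) : Prop :=
  S2 c /\ exists k, (2 <= k)%N /\ is_local_deg F c k.

Definition postcritical (F : pt3 -> pt3) : set pt3 :=
  [set y | exists c n, critical F c /\ (1 <= n)%N /\ y = iter n F c].

Definition thurston_map (F : pt3 -> pt3) (d : nat) : Prop :=
  [/\ (2 <= d)%N, branched_cover F, has_degree F d &
      exists s : seq pt3, [/\ uniq s, (forall y, postcritical F y <-> y \in s)
                            & (3 <= size s)%N]].

End Defs.

From HB Require Import structures.
From mathcomp Require Import all_boot all_order all_algebra.
From mathcomp Require Import all_classical all_reals.
From mathcomp Require Import topology normedtype trigo.
From mathcomp Require Import ring.
Import Order.TTheory GRing.Theory Num.Theory.
Import numFieldNormedType.Exports.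
Local Open Scope classical_set_scope.
Local Open Scope ring_scope.

(* Conjugating by a rotation [rot a] of S^1 turns [z |-> e^{i b} z^d] into
   [z |-> e^{i (b + d a - a)} z^d]; for [d <> 1] the choice
   [a = - b / (d - 1)] kills the twist, and [gt \o rot a] is the required
   semiconjugacy. *)

Lemma continuous_within_comp (T U V : topologicalType) (A : set T) (B : set U)
    (m : T -> U) (h : U -> V) :
  continuous m -> (forall x, A x -> B (m x)) -> {within B, continuous h} ->
  {within A, continuous (h \o m)}.
Proof.
move=> mc mAB hc; apply/subspace_continuousP => x Ax.
have /subspace_continuousP/(_ _ (mAB _ Ax)) hx := hc.
apply: cvg_comp hx.
move=> W /=; rewrite /within /= !nbhs_simpl => hW.
have := mc x _ hW; rewrite nbhs_simpl /=.
by apply: filterS => y hy Ay; exact: hy (mAB _ Ay).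
Qed.

Section ComplexRotation.
Variable R : realType.
Implicit Types (a b : R) (z u v w : cpx R).

Lemma cmulA u v w : cmul u (cmul v w) = cmul (cmul u v) w.
Proof. by rewrite /cmul /=; congr (_, _); ring. Qed.

Lemma cmul1l z : cmul (c1 R) z = z.
Proof. by case: z => x y; rewrite /cmul /c1 /=; congr (_, _); ring. Qed.

Lemma cexpnM u v n : cexpn (cmul u v) n = cmul (cexpn u n) (cexpn v n).
Proof.
elim: n => [|n IH]; first by rewrite /cexpn /= /cmul /c1 /=; congr (_, _); ring.
by rewrite /cexpn !iterS -!/(cexpn _ _) IH /cmul /=; congr (_, _); ring.
Qed.

Lemma expiD a b : cmul (expi a) (expi b) = expi (a + b).
Proof. by rewrite /cmul /expi /= cosD sinD; congr (_, _); ring. Qed.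

Lemma expi0 : expi 0 = c1 R.
Proof. by rewrite /expi cos0 sin0. Qed.

Lemma cexpn_expi a n : cexpn (expi a) n = expi (n%:R * a).
Proof.
elim: n => [|n IH]; first by rewrite /cexpn /= mul0r expi0.
by rewrite /cexpn iterS -/(cexpn _ _) IH expiD -addn1 natrD mulrDl mul1r addrC.
Qed.

Lemma cnorm_expiM a z : cnorm (cmul (expi a) z) = cnorm z.
Proof.
rewrite /cnorm /cmul /expi /=; congr Num.sqrt.
transitivity ((cos a ^+ 2 + sin a ^+ 2) * (z.1 ^+ 2 + z.2 ^+ 2)); first ring.
by rewrite cos2Dsin2 mul1r.
Qed.

Lemma continuous_cmul u : continuous (cmul u).
Proof.
move=> z; rewrite /cmul.
apply: (@cvg_pair _ _ _ (nbhs z) (nbhs (u.1 * z.1 - u.2 * z.2))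
  (nbhs (u.1 * z.2 + u.2 * z.1)) _ _ _ (fun x : cpx R => u.1 * x.1 - u.2 * x.2)
  (fun x : cpx R => u.1 * x.2 + u.2 * x.1)).
- by apply: cvgB; apply: cvgM; [exact: cvg_cst | exact: cvg_fst | exact: cvg_cst | exact: cvg_snd].
- by apply: cvgD; apply: cvgM; [exact: cvg_cst | exact: cvg_snd | exact: cvg_cst | exact: cvg_fst].
Qed.

Definition rot a : cpx R -> cpx R := cmul (expi a).

Lemma S1_rot a z : S1 z -> S1 (rot a z).
Proof. by rewrite /S1 /= /rot cnorm_expiM. Qed.

Lemma rotK a : cancel (rot a) (rot (- a)).
Proof. by move=> z; rewrite /rot cmulA expiD addNr expi0 cmul1l. Qed.

Lemma image_rot_S1 a : rot a @` @S1 R = @S1 R.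
Proof.
apply/seteqP; split => [_ [z Sz <-]|z Sz]; first exact: S1_rot.
by exists (rot (- a) z); [exact: S1_rot | rewrite -{2}(rotK (- a) z) opprK].
Qed.

Lemma cexpn_rot a z n : cexpn (rot a z) n = rot (n%:R * a) (cexpn z n).
Proof. by rewrite /rot cexpnM cexpn_expi. Qed.

Lemma rot_cexpn_rot a b z n :
  rot b (cexpn (rot a z) n) = rot (b + n%:R * a) (cexpn z n).
Proof. by rewrite cexpn_rot /rot cmulA expiD. Qed.

End ComplexRotation.

Arguments rot {R} a _.

Lemma untwist_angle (R : realType) (b : R) (d : nat) : (d != 1)%N ->
  b + d%:R * (- b / (d%:R - 1)) = - b / (d%:R - 1).
Proof.
move=> d1; have hd : (d%:R - 1 : R) != 0 by rewrite subr_eq0 pnatr_eq1.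
by field.
Qed.

Theorem lemma4p1 (R : realType) (F : pt3 R -> pt3 R) (d : nat) (theta0 : R)
    (gt : cpx R -> pt3 R) :
  thurston_map F d ->
  {within (@S1 R), continuous gt} -> gt @` (@S1 R) = (@S2 R) ->
  (forall z, (@S1 R) z -> F (gt z) = gt (cmul (expi (2 * pi * theta0)) (cexpn z d))) ->
  exists g : cpx R -> pt3 R,
    [/\ {within (@S1 R), continuous g}, g @` (@S1 R) = (@S2 R) &
        forall z, (@S1 R) z -> F (g z) = g (cexpn z d)].
Proof.
move=> [d2 _ _ _] gc gS hF.
set a := - (2 * pi * theta0) / (d%:R - 1).
have d1 : (d != 1)%N by case: d d2 {a hF} => [|[]].
exists (gt \o rot a); split.
- exact: continuous_within_comp (@continuous_cmul R _) (@S1_rot R a) gc.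
- by rewrite -image_comp image_rot_S1.
- move=> z Sz /=; rewrite hF; last exact: S1_rot.
  by rewrite -/(rot _ _) rot_cexpn_rot untwist_angle.
Qed.
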